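(* Let $M$ be a holomorphic hypersurface of a Kähler manifold with Norden metric $(M',g,J)$ of dimension $2n+2$, and let $p\in M$. If at $p$ one has $\sigma(x,y)=g(x,y)H-\tilde g(x,y)JH$ for all $x,y\in T_pM$, then $M$ is h-umbilical at $p$ with respect to every vector $\eta$ normal to $M$ at $p$, i.e. $$A_\eta=\frac{\operatorname{trace}A_\eta}{2n}\,I-\frac{\operatorname{trace}(A_\eta\circ J)}{2n}\,J.$$
   Context: A Kähler manifold with Norden metric: manifold $M'$ with almost complex structure $J$, pseudo-Riemannian metric $g$ with $g(JX,JY)=-g(X,Y)$ and $\nabla'J=0$; $\tilde g(X,Y)=g(JX,Y)$. A holomorphic hypersurface is a $2n$-dimensional submanifold $M$ with $J(T_pM)=T_pM$ and $g|_{T_pM}$ nondegenerate, with induced Levi-Civita connection $\nabla$; its second fundamental form $\sigma$ is defined by $\nabla'_XY=\nabla_XY+\sigma(X,Y)$ and its mean curvature vector is $H=\frac1{2n}\operatorname{trace}_g\sigma$. For a vector $\eta$ normal to $M$ at $p$, $A_\eta$ is the endomorphism of $T_pM$ with $g(A_\eta x,y)=g(\sigma(x,y),\eta)$; $I$ is the identity. *)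

(* Pointwise (linear-algebra) model of the situation at p. *)
From HB Require Import structures.
From mathcomp Require Import all_boot all_order all_algebra.
Set Implicit Arguments. Unset Strict Implicit. Unset Printing Implicit Defensive.
Import Order.TTheory GRing.Theory Num.Theory.
Local Open Scope ring_scope.

(* Vectors of T_pM' are row vectors 'rV_k (coordinates in a fixed basis);
   a linear endomorphism F acts by x |-> x *m F.
   The metric g at p is given by its Gram matrix G: g(x,y) = x G y^T. *)
Definition gform {R : ringType} {k : nat} (G : 'M[R]_k) (x y : 'rV[R]_k) : R :=
  (x *m G *m y^T) 0 0.

Definition gtilde {R : ringType} {k : nat} (G J : 'M[R]_k) (x y : 'rV[R]_k) : R :=
  gform G (x *m J) y.

(* The tangent space T_pM is the row space of a row-free matrix B whose
   rows form a basis of T_pM.  Gram matrix of g|_{T_pM} in that basis. *)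
Definition gram {R : ringType} {m k : nat} (G : 'M[R]_k) (B : 'M[R]_(m, k))
  : 'M[R]_m := B *m G *m B^T.

Definition mean_curv {R : fieldType} {m k : nat} (G : 'M[R]_k) (B : 'M[R]_(m, k))
  (sigma : 'rV[R]_k -> 'rV[R]_k -> 'rV[R]_k) : 'rV[R]_k :=
  (m%:R)^-1 *: \sum_(i < m) \sum_(j < m)
     (invmx (gram G B)) i j *: sigma (row i B) (row j B).

(* Matrix (in the basis B, row convention) of the shape operator A_eta:
   the endomorphism of T_pM with g(A_eta x, y) = g(sigma(x,y), eta). *)
Definition shape_op {R : fieldType} {m k : nat} (G : 'M[R]_k) (B : 'M[R]_(m, k))
  (sigma : 'rV[R]_k -> 'rV[R]_k -> 'rV[R]_k) (eta : 'rV[R]_k) : 'M[R]_m :=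
  (\matrix_(i < m, j < m) gform G (sigma (row i B) (row j B)) eta)
    *m invmx (gram G B).

(* Matrix (in the basis B) of the restriction J|_{T_pM}: rows of B *m J
   expressed in the basis B. *)
Definition restr_mx {R : fieldType} {m k : nat} (B : 'M[R]_(m, k)) (F : 'M[R]_k)
  : 'M[R]_m := (B *m F) *m pinvmx B.

From HB Require Import structures.
From mathcomp Require Import all_boot all_order all_algebra.
Set Implicit Arguments. Unset Strict Implicit. Unset Printing Implicit Defensive.
Import Order.TTheory GRing.Theory Num.Theory.
Local Open Scope ring_scope.

(* In a basis b of T_pM with Gram matrix Γ, the hypothesis reads
   σ(b_i, b_j) = Γ_ij H - (J Γ)_ij JH, hence A_η = g(H,η) I - g(JH,η) J.
   Substituting the same formula into the definition of H as a g-trace gives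
   H = H - (tr J / 2n) JH, i.e. (tr J) JH = 0.  So either tr J = 0, and the
   traces of A_η and of J A_η recover the two coefficients, or H = 0 and A_η = 0. *)

Lemma gform_row (R : nzRingType) (p q k : nat) (X : 'M[R]_(p, k)) (G : 'M[R]_k)
    (Z : 'M[R]_(q, k)) i j :
  gform G (row i X) (row j Z) = (X *m G *m Z^T) i j.
Proof.
rewrite /gform -!row_mul !mxE; apply: eq_bigr => l _.
by rewrite !mxE.
Qed.

Lemma gformBl (R : comNzRingType) (k : nat) (G : 'M[R]_k) a b (u v w : 'rV[R]_k) :
  gform G (a *: u - b *: v) w = a * gform G u w - b * gform G v w.
Proof. by rewrite /gform !mulmxBl -!scalemxAl !mxE. Qed.

Lemma gformZl (R : comNzRingType) (k : nat) (G : 'M[R]_k) a (u v : 'rV[R]_k) :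
  gform G (a *: u) v = a * gform G u v.
Proof. by rewrite /gform -!scalemxAl mxE. Qed.

Lemma gram_sym (R : comNzRingType) (m k : nat) (G : 'M[R]_k) (B : 'M[R]_(m, k)) :
  G^T = G -> (gram G B)^T = gram G B.
Proof. by move=> G_sym; rewrite /gram !trmx_mul trmxK G_sym mulmxA. Qed.

Lemma mul_restr_mx (R : fieldType) (m k : nat) (B : 'M[R]_(m, k)) (F : 'M[R]_k) :
  (B *m F <= B)%MS -> restr_mx B F *m B = B *m F.
Proof. exact: mulmxKpV. Qed.

Lemma restr_mx_sqr_opp1 (R : fieldType) (m k : nat) (B : 'M[R]_(m, k))
    (F : 'M[R]_k) :
  row_free B -> (B *m F <= B)%MS -> F *m F = - 1%:M ->
  restr_mx B F *m restr_mx B F = - 1%:M.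
Proof.
move=> B_free B_F F2; apply: (row_free_inj B_free) => /=.
rewrite -mulmxA mul_restr_mx // mulmxA mul_restr_mx // -mulmxA F2.
by rewrite mulmxN mulmx1 mulNmx mul1mx.
Qed.

Lemma mxtrace_mulmxT (R : comNzRingType) (m : nat) (X Y : 'M[R]_m) :
  \sum_(i < m) \sum_(j < m) X i j * Y i j = \tr (X *m Y^T).
Proof.
apply: eq_bigr => i _; rewrite mxE.
by apply: eq_bigr => j _; rewrite mxE.
Qed.

Section HolomorphicHypersurface.

Variables (R : fieldType) (m k : nat).
Variables (G J : 'M[R]_k) (B : 'M[R]_(m, k)).
Variables (sigma : 'rV[R]_k -> 'rV[R]_k -> 'rV[R]_k) (H : 'rV[R]_k).

Hypothesis B_hol : (B *m J <= B)%MS.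
Hypothesis gram_unit : gram G B \in unitmx.
Hypothesis sigma_hypothesis : forall x y, (x <= B)%MS -> (y <= B)%MS ->
  sigma x y = gform G x y *: H - gtilde G J x y *: (H *m J).

Local Notation JM := (restr_mx B J).
Local Notation Gam := (gram G B).

Lemma sigma_basisE i j :
  sigma (row i B) (row j B) = Gam i j *: H - (JM *m Gam) i j *: (H *m J).
Proof.
rewrite sigma_hypothesis ?row_sub // /gtilde -row_mul !gform_row.
by rewrite /gram !mulmxA mul_restr_mx.
Qed.

Lemma shape_op_h_umbilical eta :
  shape_op G B sigma eta
    = gform G H eta *: 1%:M - gform G (H *m J) eta *: JM.
Proof.
rewrite /shape_op.
have -> : \matrix_(i < m, j < m) gform G (sigma (row i B) (row j B)) eta
    = gform G H eta *: Gam - gform G (H *m J) eta *: (JM *m Gam).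
  apply/matrixP => i j.
  by rewrite [LHS]mxE sigma_basisE gformBl [RHS]mxE !mxE mulrC [_ * gform _ _ _]mulrC.
by rewrite mulmxBl -!scalemxAl -[JM *m _ *m _]mulmxA !mulmxV // mulmx1.
Qed.

Lemma mean_curvE : G^T = G -> (m%:R : R) != 0 ->
  mean_curv G B sigma = H - (m%:R^-1 * \tr JM) *: (H *m J).
Proof.
move=> G_sym m_neq0; rewrite /mean_curv.
have -> : \sum_(i < m) \sum_(j < m) invmx Gam i j *: sigma (row i B) (row j B)
    = (\sum_(i < m) \sum_(j < m) invmx Gam i j * Gam i j) *: H
      - (\sum_(i < m) \sum_(j < m) invmx Gam i j * (JM *m Gam) i j) *: (H *m J).
  rewrite !scaler_suml -sumrB; apply: eq_bigr => i _.
  rewrite !scaler_suml -sumrB; apply: eq_bigr => j _.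
  by rewrite sigma_basisE scalerBr !scalerA.
rewrite !mxtrace_mulmxT gram_sym // mulVmx // mxtrace1.
rewrite trmx_mul gram_sym // mulmxA mulVmx // mul1mx mxtrace_tr.
by rewrite scalerBr !scalerA mulVf // scale1r.
Qed.

Lemma mxtrace_restr_scaleHJ_eq0 : G^T = G -> (m%:R : R) != 0 ->
  H = mean_curv G B sigma -> \tr JM *: (H *m J) = 0.
Proof.
move=> G_sym m_neq0; rewrite mean_curvE // => /eqP.
rewrite -subr_eq0 opprB addrC subrK scaler_eq0 mulf_eq0 invr_eq0.
rewrite (negbTE m_neq0) /= => /orP[/eqP->|/eqP->]; first by rewrite scale0r.
by rewrite scaler0.
Qed.

End HolomorphicHypersurface.

(* The two sides differ by (tr J / m)(b I + a J), whence the last hypotheses. *)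
Lemma h_umbilical_traces (R : fieldType) (m : nat) (JM : 'M[R]_m) (a b : R) :
  (m%:R : R) != 0 -> JM *m JM = - 1%:M -> \tr JM * a = 0 -> \tr JM * b = 0 ->
  let A := a *: 1%:M - b *: JM in
  A = (m%:R^-1 * \tr A)%:M - (m%:R^-1 * \tr (JM *m A)) *: JM.
Proof.
move=> m_neq0 JM2 ta0 tb0 A.
have trA : \tr A = a * m%:R - b * \tr JM.
  by rewrite linearB /= !mxtraceZ mxtrace1.
have trJA : \tr (JM *m A) = a * \tr JM + b * m%:R.
  rewrite mulmxBr -!scalemxAr mulmx1 JM2 linearB /= !mxtraceZ.
  by rewrite linearN /= mxtrace1 mulrN opprK.
rewrite trA trJA ![_ * \tr JM]mulrC ta0 tb0 subr0 add0r.
rewrite ![_ * m%:R]mulrC !mulrA mulVf // !mul1r.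
by rewrite -scalemx1.
Qed.

Theorem lemma2p4 (R : realFieldType) (n : nat) (n_gt0 : (0 < n)%N)
  (* the metric g and almost complex structure J of M' at p, dim M' = 2n+2 *)
  (G J : 'M[R]_(2 * n + 2))
  (G_sym : G^T = G) (G_nondeg : G \in unitmx)
  (J2 : J *m J = - 1%:M)
  (Norden : forall x y, gform G (x *m J) (y *m J) = - gform G x y)
  (* T_pM : row space of B (a basis), J-invariant, g|T_pM nondegenerate *)
  (B : 'M[R]_(2 * n, 2 * n + 2))
  (B_free : row_free B)
  (B_hol : (B *m J <= B)%MS)
  (B_nondeg : gram G B \in unitmx)
  (* the second fundamental form at p: symmetric, normal-valued *)
  (sigma : 'rV[R]_(2 * n + 2) -> 'rV[R]_(2 * n + 2) -> 'rV[R]_(2 * n + 2))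
  (sigma_sym : forall x y, (x <= B)%MS -> (y <= B)%MS -> sigma x y = sigma y x)
  (sigma_normal : forall x y z, (x <= B)%MS -> (y <= B)%MS -> (z <= B)%MS ->
      gform G (sigma x y) z = 0)
  (* the mean curvature vector at p *)
  (H : 'rV[R]_(2 * n + 2)) (H_def : H = mean_curv G B sigma)
  (* the hypothesis at p *)
  (Hsigma : forall x y, (x <= B)%MS -> (y <= B)%MS ->
      sigma x y = gform G x y *: H - gtilde G J x y *: (H *m J))
  (* any normal vector eta at p *)
  (eta : 'rV[R]_(2 * n + 2))
  (eta_normal : forall z, (z <= B)%MS -> gform G z eta = 0) :
  let A := shape_op G B sigma eta in
  let JM := restr_mx B J in
  A = ((2 * n)%:R^-1 * \tr A) %:M - ((2 * n)%:R^-1 * \tr (JM *m A)) *: JM.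
Proof.
move=> A JM.
have m_neq0 : ((2 * n)%:R : R) != 0.
  by rewrite pnatr_eq0 muln_eq0 negb_or /= -lt0n n_gt0.
have tHJ0 : \tr JM *: (H *m J) = 0 :=
  mxtrace_restr_scaleHJ_eq0 B_hol B_nondeg Hsigma G_sym m_neq0 H_def.
have tH0 : \tr JM *: H = 0.
  by rewrite -[H]mulmx1 -[1%:M]opprK -J2 mulmxN mulmxA scalerN scalemxAl tHJ0 mul0mx oppr0.
rewrite /A (shape_op_h_umbilical B_hol B_nondeg Hsigma).
apply: h_umbilical_traces => //; first exact: restr_mx_sqr_opp1.
- by rewrite -gformZl tH0 /gform !mul0mx mxE.
- by rewrite -gformZl tHJ0 /gform !mul0mx mxE.
Qed.
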